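(* Let $\mathcal{G}$ be a directed graph without self-loops with vertices $v_1,\dots,v_k$, and let $A_1,\dots,A_k$ be real $2\times 2$ matrices. Suppose there exist invertible matrices $P_1,\dots,P_k$ and Jordan matrices $J_1,\dots,J_k$ with $A_i=P_iJ_iP_i^{-1}$ a Jordan decomposition of $A_i$, such that for each $(r,s)\in\mathcal{E}(\mathcal{G})$ there exists $\eta_{(r,s)}>0$ with $\Vert P_s^{-1}P_re^{\eta_{(r,s)}J_r}\Vert<1$. Then for every loop $(i_1,\dots,i_p,i_1)$ in $\mathcal{G}$, the traces of $A_{i_1},\dots,A_{i_p}$ are not all non-negative, i.e. $\operatorname{trace}(A_{i_j})<0$ for at least one $j\in\{1,\dots,p\}$.
   Context: $\mathcal{E}(\mathcal{G})$ is the set of ordered pairs $(i,j)$ such that there is a directed edge from $v_i$ to $v_j$. A loop $(i_1,\dots,i_p,i_1)$ is a sequence of vertices $v_{i_1},\dots,v_{i_p},v_{i_1}$ with a directed edge from each vertex to the next. $\Vert\cdot\Vert$ denotes the spectral norm. *)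

From HB Require Import structures.
From mathcomp Require Import all_boot all_order all_algebra.
From mathcomp Require Import all_classical all_reals all_analysis.
From mathcomp.real_closed Require Import complex.
Import Order.TTheory GRing.Theory Num.Theory.
Import numFieldNormedType.Exports.

Set Implicit Arguments.
Unset Strict Implicit.
Unset Printing Implicit Defensive.

Local Open Scope ring_scope.
Local Open Scope classical_set_scope.

Definition cplx_mx (R : rcfType) (m n : nat) (A : 'M[R]_(m, n)) : 'M[R[i]]_(m, n) :=
  map_mx (fun x : R => x%:C%C) A.

Definition expmx (R : realType) (n : nat) (M : 'M[R[i]]_n.+1) : 'M[R[i]]_n.+1 :=
  limn (fun N : nat => \sum_(j < N) (j`!%:R)^-1 *: M ^+ j).

Definition vnorm2 (R : rcfType) (n : nat) (v : 'cV[R[i]]_n) : R :=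
  Num.sqrt (\sum_(j < n) (Normc.normc (v j 0)) ^+ 2).

Definition specnorm (R : realType) (m n : nat) (M : 'M[R[i]]_(m, n)) : R :=
  sup [set r : R | exists v : 'cV[R[i]]_n, vnorm2 v <= 1 /\ r = vnorm2 (M *m v)].

(* A 2x2 Jordan matrix (block diagonal with Jordan blocks): upper triangular,
   and the superdiagonal entry is 0, or it is 1 and the two diagonal entries
   (eigenvalues) coincide. *)
Definition is_jordan2 (R : rcfType) (J : 'M[R[i]]_2) : Prop :=
  J 1 0 = 0 /\ (J 0 1 = 0 \/ (J 0 1 = 1 /\ J 0 0 = J 1 1)).

Definition no_self_loops (k : nat) (E : rel 'I_k) : Prop := forall i, ~~ E i i.

(* A loop (i_1, ..., i_p, i_1): a nonempty sequence of vertices with an edge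
   from each vertex to the next and from the last back to the first. *)
Definition is_loop (k : nat) (E : rel 'I_k) (s : seq 'I_k) : Prop :=
  s != [::] /\ cycle E s.

From HB Require Import structures.
From mathcomp Require Import all_boot all_order all_algebra.
From mathcomp Require Import all_classical all_reals all_analysis.
From mathcomp.real_closed Require Import complex.
From mathcomp Require Import ring lra.
Import Order.TTheory GRing.Theory Num.Theory.
Import numFieldNormedType.Exports.
Local Open Scope ring_scope.
Local Open Scope classical_set_scope.
Local Open Scope complex_scope.

(* Let (r, s) be an edge with tr A_r >= 0 and M := P_s^-1 P_r e^(eta J_r).
   For a 2x2 matrix, |det M| is at most the mean of the squared norms of the
   two columns, each of which is at most ||M||^2 < 1.  Since J_r is upper
   triangular, det e^(eta J_r) = e^(eta tr J_r) = e^(eta tr A_r) >= 1, so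
   |det P_r| < |det P_s|.  If all traces along a loop were non-negative,
   |det P| would strictly increase all the way around it. *)

Lemma big_ord2 {V : nmodType} (F : 'I_2 -> V) : \sum_(i < 2) F i = F 0 + F 1.
Proof.
by rewrite !big_ord_recl big_ord0 addr0; congr (F _ + F _); apply: val_inj.
Qed.

Lemma det_mx2 {F : comPzRingType} (A : 'M[F]_2) :
  \det A = A 0 0 * A 1 1 - A 0 1 * A 1 0.
Proof.
rewrite (expand_det_row _ 0) big_ord2 /cofactor !det_mx11 !mxE.
have -> : lift (0 : 'I_2) (0 : 'I_1) = 1 by apply: val_inj.
have -> : lift (1 : 'I_2) (0 : 'I_1) = 0 by apply: val_inj.
by rewrite /= expr0 expr1 !mul1r mulN1r mulrN.
Qed.

Lemma mx2_upper_expr {F : pzRingType} {M : 'M[F]_2} : M 1 0 = 0 -> forall j,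
  [/\ (M ^+ j) 1 0 = 0, (M ^+ j) 0 0 = M 0 0 ^+ j & (M ^+ j) 1 1 = M 1 1 ^+ j].
Proof.
move=> M10; elim=> [|j [Mj10 Mj00 Mj11]]; first by rewrite !expr0 !mxE.
rewrite !exprSr -mulmxE !mxE !big_ord2 Mj10 Mj00 Mj11 M10.
by rewrite !mul0r !mulr0 !add0r !addr0.
Qed.

Lemma mxtrace_conj {F : comUnitRingType} {n} (P J : 'M[F]_n) :
  P \in unitmx -> \tr (P *m J *m invmx P) = \tr J.
Proof. by move=> P_unit; rewrite mxtrace_mulC mulmxA mulVmx ?mul1mx. Qed.

Lemma cvg_mx_entries {T : puniformType} {m n} (X : nat -> 'M[T]_(m, n))
    (L : 'M[T]_(m, n)) :
  (forall i j, (fun N => X N i j) @ \oo --> L i j) -> X @ \oo --> L.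
Proof.
move=> XL A /= [P LP PA].
have : \forall N \near \oo, forall i j, P i j (X N i j).
  by apply: filter_forall => i; apply: filter_forall => j; exact: XL.
by apply: filterS => N; exact: PA.
Qed.

Lemma sum_antidiagonal {V : nmodType} (h : nat -> nat -> V) N :
  \sum_(0 <= n < N) \sum_(0 <= i < n.+1) h i (n - i)%N =
  \sum_(0 <= i < N) \sum_(0 <= j < N - i) h i j.
Proof.
elim: N => [|N IH]; first by rewrite !big_geq.
rewrite big_nat_recr //= IH.
rewrite [RHS](eq_big_nat _ _
  (F2 := fun i => \sum_(0 <= j < N - i) h i j + h i (N - i)%N)).
  rewrite big_split /=; congr (_ + _).
  by rewrite big_nat_recr //= subnn [X in _ + X]big_geq ?addr0.
by move=> i /andP[_ iN]; rewrite subSn // big_nat_recr.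
Qed.

Lemma cycle_increasing_nil {T : eqType} {d} {U : porderType d} (e : rel T)
    (f : T -> U) (s : seq T) :
  {in s, forall a b, e a b -> (f a < f b)%O} -> cycle e s -> s = [::].
Proof.
case: s => [//|x p] f_incr /= x_cycle; exfalso.
have : path [rel a b | (f a < f b)%O] x (rcons p x).
  apply: (@sub_in_path _ (mem (x :: p)) e) x_cycle => [a b a_s _|].
    exact: f_incr.
  by apply/allP => y; rewrite /= !inE mem_rcons !inE => /orP[->|].
rewrite path_sortedE; last by move=> ? ? ?; exact: lt_trans.
by case/andP => /allP/(_ x); rewrite mem_rcons mem_head /= ltxx => /(_ isT).
Qed.

Section exponential_partial_sums.
Context {F : numFieldType}.

(* For a real x, exp_term x is convertible to exp_coeff x, whose series
   defines expR x. *)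
Definition exp_term (z : F) : F ^nat := [sequence z ^+ n / n`!%:R]_n.

Lemma exp_termD (z w : F) n :
  exp_term (z + w) n = \sum_(0 <= i < n.+1) exp_term z i * exp_term w (n - i)%N.
Proof.
rewrite /exp_term /= addrC exprDn big_mkord mulr_suml; apply: eq_bigr => i _.
have i_le_n : (i <= n)%N by rewrite -ltnS.
have fact_neq0 m : (m`!%:R : F) != 0 by rewrite pnatr_eq0 -lt0n fact_gt0.
have bin_neq0 : ('C(n, i)%:R : F) != 0 by rewrite pnatr_eq0 -lt0n bin_gt0.
rewrite -(bin_fact i_le_n) !natrM -mulr_natr.
by field; rewrite !fact_neq0 bin_neq0.
Qed.

Lemma series_exp_term_mulB (z w : F) N :
  series (exp_term z) N * series (exp_term w) N - series (exp_term (z + w)) N =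
  \sum_(0 <= i < N) \sum_(N - i <= j < N) exp_term z i * exp_term w j.
Proof.
rewrite /series /= mulr_suml.
under [X in X - _]eq_bigr do rewrite mulr_sumr.
under [X in _ - X]eq_bigr do rewrite exp_termD.
rewrite (sum_antidiagonal (fun i j => exp_term z i * exp_term w j)) -sumrB.
apply: eq_big_nat => i /andP[_ iN].
by rewrite (@big_cat_nat _ _ _ (N - i)) ?leq_subr //= addrC addrK.
Qed.

End exponential_partial_sums.

Section complex_matrices.
Context {R : realType}.
Local Notation normc := (@Normc.normc R).
Local Notation Re := (@complex.Re R).
Local Notation Im := (@complex.Im R).
(* R[i] through its numFieldType structure, on which the topological
   instances of MathComp-Analysis are found. *)
Local Notation C := ((R[i] : numFieldType) : Type).

Lemma normc_ge0 (z : R[i]) : 0 <= normc z.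
Proof. by case: z => a b; exact: sqrtr_ge0. Qed.

Lemma normc_real (x : R) : normc x%:C = `|x|.
Proof. by rewrite /Normc.normc /= expr0n /= addr0 sqrtr_sqr. Qed.

Lemma normc_natr n : normc n%:R = n%:R.
Proof. by rewrite -(rmorph_nat (real_complex R)) normc_real ger0_norm. Qed.

Lemma normc_sum {I : Type} (s : seq I) (f : I -> R[i]) :
  normc (\sum_(i <- s) f i) <= \sum_(i <- s) normc (f i).
Proof.
elim: s => [|a s IH]; first by rewrite !big_nil Normc.normc0.
by rewrite !big_cons (le_trans (le_normcD _ _)) // lerD2l.
Qed.

Lemma normc_Re_le (z : R[i]) : `|Re z| <= normc z.
Proof.
case: z => a b; rewrite /Normc.normc /= -(sqrtr_sqr a) ler_wsqrtr //.
by rewrite lerDl sqr_ge0.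
Qed.

Lemma normc_Im_le (z : R[i]) : `|Im z| <= normc z.
Proof.
case: z => a b; rewrite /Normc.normc /= -(sqrtr_sqr b) ler_wsqrtr //.
by rewrite lerDr sqr_ge0.
Qed.

Lemma normc_le_ReIm (z : R[i]) : normc z <= `|Re z| + `|Im z|.
Proof.
case: z => a b; rewrite /Normc.normc /= -[leRHS]ger0_norm ?addr_ge0 //.
rewrite -sqrtr_sqr ler_wsqrtr // sqrrD !real_normK ?num_real //.
by rewrite -addrA lerD2l lerDr mulrn_wge0 // mulr_ge0.
Qed.

Lemma Re_series (u : C ^nat) n : Re (series u n) = series (fun k => Re (u k)) n.
Proof. exact: (@raddf_sum (Rcomplex R) R Re). Qed.

Lemma Im_series (u : C ^nat) n : Im (series u n) = series (fun k => Im (u k)) n.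
Proof. exact: (@raddf_sum (Rcomplex R) R Im). Qed.

Lemma cvg_normc (u : C ^nat) (l : C) :
  (forall e : R, 0 < e -> \forall n \near \oo, normc (l - u n) < e) ->
  u @ \oo --> l.
Proof.
move=> ul; apply/cvgrPdist_lt => -[e _] /andP[/eqP -> /= e_gt0].
near=> n; rewrite -[`|_|]/((normc _)%:C) ltcR.
by near: n; exact: ul.
Unshelve. all: by end_near. Qed.

Lemma cvg_ReIm (u : C ^nat) (a b : R) :
  (fun n => Re (u n)) @ \oo --> a -> (fun n => Im (u n)) @ \oo --> b ->
  u @ \oo --> (a +i* b : C).
Proof.
move=> /cvgrPdist_lt ua /cvgrPdist_lt ub; apply: cvg_normc => e e_gt0.
have e2_gt0 : 0 < e / 2 by rewrite divr_gt0.
near=> n; apply: le_lt_trans (normc_le_ReIm _) _; rewrite [e]splitr ltrD //.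
  by near: n; apply: filterS (ua _ e2_gt0) => n; case: (u n).
by near: n; apply: filterS (ub _ e2_gt0) => n; case: (u n).
Unshelve. all: by end_near. Qed.

Lemma cvg_realC (u : R ^nat) (x : R) :
  u @ \oo --> x -> (fun n => (u n)%:C : C) @ \oo --> (x%:C : C).
Proof. by move=> ux; apply: cvg_ReIm => //; exact: cvg_cst. Qed.

Lemma is_cvg_series_le_norm (w v : R ^nat) :
  (forall n, `|w n| <= v n) -> cvgn (series v) -> cvgn (series w).
Proof.
move=> wv cv; apply: (@normed_cvg R R^o).
by apply: (series_le_cvg _ _ wv cv) => n //; exact: le_trans (wv n).
Qed.

Lemma is_cvg_series_le_normc (u : C ^nat) (v : R ^nat) :
  (forall n, normc (u n) <= v n) -> cvgn (series v) -> cvgn (series u).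
Proof.
move=> uv cv; apply/cvg_ex; eexists; apply: cvg_ReIm.
  under eq_fun do rewrite Re_series.
  apply: (is_cvg_series_le_norm _ v _ cv) => n.
  exact: le_trans (normc_Re_le _) (uv n).
under eq_fun do rewrite Im_series.
apply: (is_cvg_series_le_norm _ v _ cv) => n.
exact: le_trans (normc_Im_le _) (uv n).
Qed.

Lemma series_exp_term_realC (x : R) :
  series (exp_term (x%:C : C)) @ \oo --> ((expR x)%:C : C).
Proof.
have -> : series (exp_term (x%:C : C)) = (fun n => (series (exp_term x) n)%:C).
  apply/funext => n; rewrite /series /= rmorph_sum; apply: eq_bigr => k _.
  by rewrite /exp_term /= rmorphM rmorphXn fmorphV rmorph_nat.
exact/cvg_realC/is_cvg_series_exp_coeff.
Qed.

Lemma normc_exp_term (z : C) n : normc (exp_term z n) = exp_term (normc z) n.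
Proof.
rewrite /exp_term /= Normc.normcM Normc.normcV normc_natr; congr (_ * _).
by elim: n => [|n IH]; rewrite ?Normc.normc1 // !exprS Normc.normcM IH.
Qed.

Lemma normc_series_exp_term_mulB (z w : C) N :
  normc (series (exp_term z) N * series (exp_term w) N
         - series (exp_term (z + w)) N)
  <= series (exp_term (normc z)) N * series (exp_term (normc w)) N
     - series (exp_term (normc z + normc w)) N.
Proof.
rewrite !series_exp_term_mulB (le_trans (normc_sum _ _)) //.
apply: ler_sum => i _; apply: (le_trans (normc_sum _ _)); apply: ler_sum => j _.
by rewrite Normc.normcM !normc_exp_term.
Qed.

(* The defect of the Cauchy product is dominated by the real one for normc z
   and normc w, which tends to expR |z| * expR |w| - expR (|z| + |w|) = 0. *)
Lemma series_exp_termD {z w a b : C} :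
  series (exp_term z) @ \oo --> a -> series (exp_term w) @ \oo --> b ->
  series (exp_term (z + w)) @ \oo --> a * b.
Proof.
move=> za wb.
set d := fun N => series (exp_term z) N * series (exp_term w) N
                  - series (exp_term (z + w)) N.
have d0 : d @ \oo --> (0 : C).
  have /(@cvgrPdist_lt _ R^o) real_d0 : (fun N =>
      series (exp_term (normc z)) N * series (exp_term (normc w)) N
      - series (exp_term (normc z + normc w)) N) @ \oo --> (0 : R).
    rewrite -(subrr (expR (normc z + normc w))) {1}expRD.
    by apply: cvgB; [apply: cvgM|]; exact: is_cvg_series_exp_coeff.
  apply: cvg_normc => e /real_d0; apply: filterS => N.
  rewrite !sub0r normrN normcN => /(le_lt_trans (ler_norm _)).
  exact: le_lt_trans (normc_series_exp_term_mulB _ _ _).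
have -> : series (exp_term (z + w)) =
    fun N => series (exp_term z) N * series (exp_term w) N - d N.
  by apply/funext => N; rewrite /d opprB addrCA subrr addr0.
have ab : (fun N => series (exp_term z) N * series (exp_term w) N) @ \oo
    --> a * b by exact: (cvgM za wb).
by rewrite -[a * b]subr0; exact: cvgB ab d0.
Qed.

Lemma normc_mx_expr_le {n} (M : 'M[C]_n) j a b :
  normc ((M ^+ j) a b) <= (\sum_k \sum_l normc (M k l)) ^+ j.
Proof.
set m := \sum_k \sum_l normc (M k l).
have m_ge0 : 0 <= m by do 2!apply: sumr_ge0 => ? _; exact: normc_ge0.
elim: j a b => [|j IH] a b.
  by rewrite !expr0 mxE; case: eqP => _; rewrite ?Normc.normc1 ?Normc.normc0.
rewrite exprSr -mulmxE mxE exprSr (le_trans (normc_sum _ _)) //.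
apply: (@le_trans _ _ (\sum_l m ^+ j * normc (M l b))).
  by apply: ler_sum => l _; rewrite Normc.normcM ler_wpM2r ?normc_ge0.
rewrite -mulr_sumr ler_wpM2l ?exprn_ge0 //; apply: ler_sum => l _.
by rewrite (bigD1 b) //= lerDl sumr_ge0 // => ? _; exact: normc_ge0.
Qed.

Lemma expmx_entry_cvg {n} (M : 'M[C]_n.+1) a b :
  series (fun j => (j`!%:R)^-1 * (M ^+ j) a b) @ \oo --> (expmx M a b : C).
Proof.
set m := \sum_k \sum_l normc (M k l).
have entry_cvg a' b' : cvgn (series (fun j => (j`!%:R)^-1 * (M ^+ j) a' b')).
  apply: (is_cvg_series_le_normc _ (exp_coeff m) _ (is_cvg_series_exp_coeff m)).
  move=> j; rewrite Normc.normcM Normc.normcV normc_natr mulrC.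
  by rewrite ler_wpM2r ?invr_ge0 // normc_mx_expr_le.
pose L := \matrix_(a', b') limn (series (fun j => (j`!%:R)^-1 * (M ^+ j) a' b')).
have -> : expmx M = L.
  apply: (cvg_lim (@norm_hausdorff _ _)); apply: cvg_mx_entries => a' b'.
  rewrite mxE; apply: cvg_trans (entry_cvg a' b'); apply: near_eq_cvg; near=> N.
  by rewrite summxE /series /= big_mkord; apply: eq_bigr => j _; rewrite mxE.
by rewrite mxE; exact: entry_cvg.
Unshelve. all: by end_near. Qed.

Lemma expmx_diag_cvg {n} (M : 'M[C]_n.+1) k :
  (forall j, (M ^+ j) k k = M k k ^+ j) ->
  series (exp_term (M k k)) @ \oo --> (expmx M k k : C).
Proof.
move=> Mkk; rewrite (_ : exp_term _ = fun j => (j`!%:R)^-1 * (M ^+ j) k k).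
  exact: expmx_entry_cvg.
by apply/funext => j; rewrite Mkk mulrC.
Qed.

Lemma det_expmx_upper2 (M : 'M[C]_2) (t : R) :
  M 1 0 = 0 -> \tr M = t%:C -> \det (expmx M) = (expR t)%:C.
Proof.
move=> M10 trM; have Mj := mx2_upper_expr M10.
have e10 : expmx M 1 0 = 0.
  apply: (cvg_unique (@norm_hausdorff _ _) (expmx_entry_cvg M 1 0)).
  apply: cvg_near_cst; apply: nearW => N; rewrite /series /= big1 // => j _.
  by case: (Mj j) => -> _ _; rewrite mulr0.
have cvg00 : series (exp_term (M 0 0)) @ \oo --> (expmx M 0 0 : C).
  by apply: expmx_diag_cvg => j; case: (Mj j).
have cvg11 : series (exp_term (M 1 1)) @ \oo --> (expmx M 1 1 : C).
  by apply: expmx_diag_cvg => j; case: (Mj j).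
rewrite det_mx2 e10 mulr0 subr0.
apply: (cvg_unique (@norm_hausdorff _ _) (series_exp_termD cvg00 cvg11)).
have -> : M 0 0 + M 1 1 = t%:C by rewrite -trM /mxtrace big_ord2.
exact: series_exp_term_realC.
Qed.

Lemma normc_le_vnorm2 {n} (v : 'cV[R[i]]_n) j : normc (v j 0) <= vnorm2 v.
Proof.
rewrite -[normc _]ger0_norm ?normc_ge0 // -sqrtr_sqr ler_wsqrtr //.
by rewrite (bigD1 j) //= lerDl sumr_ge0 // => *; exact: sqr_ge0.
Qed.

Lemma vnorm2_le_sum {n} (v : 'cV[R[i]]_n) : vnorm2 v <= \sum_j normc (v j 0).
Proof.
have sum_ge0 : 0 <= \sum_j normc (v j 0).
  by apply: sumr_ge0 => *; exact: normc_ge0.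
rewrite -[leRHS]ger0_norm // -sqrtr_sqr ler_wsqrtr // expr2 mulr_suml.
apply: ler_sum => j _; rewrite expr2 ler_wpM2l ?normc_ge0 // (bigD1 j) //=.
by rewrite lerDl sumr_ge0 // => *; exact: normc_ge0.
Qed.

Lemma specnorm_ubound {m n} (M : 'M[R[i]]_(m, n)) :
  has_ubound [set r : R | exists v : 'cV[R[i]]_n,
                            vnorm2 v <= 1 /\ r = vnorm2 (M *m v)].
Proof.
exists (\sum_i \sum_j normc (M i j)) => _ [v [v_le1 ->]].
apply: le_trans (vnorm2_le_sum _) _; apply: ler_sum => i _.
rewrite mxE (le_trans (normc_sum _ _)) //; apply: ler_sum => j _.
rewrite Normc.normcM ler_piMr ?normc_ge0 //.
exact: le_trans (normc_le_vnorm2 _ _) v_le1.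
Qed.

Lemma vnorm2_mul_le_specnorm {m n} (M : 'M[R[i]]_(m, n)) v :
  vnorm2 v <= 1 -> vnorm2 (M *m v) <= specnorm M.
Proof. by move=> v_le1; apply: (ub_le_sup (specnorm_ubound M)); exists v. Qed.

Lemma vnorm2_delta {n} (k : 'I_n) : vnorm2 (delta_mx k 0 : 'cV[R[i]]_n) = 1.
Proof.
rewrite /vnorm2 (bigD1 k) //= big1 => [|j /negPf jk]; last first.
  by rewrite mxE jk Normc.normc0 expr0n.
by rewrite mxE !eqxx Normc.normc1 expr1n addr0 sqrtr1.
Qed.

Lemma vnorm2_col_le_specnorm {m n} (M : 'M[R[i]]_(m, n)) k :
  vnorm2 (col k M) <= specnorm M.
Proof. by rewrite colE; apply: vnorm2_mul_le_specnorm; rewrite vnorm2_delta. Qed.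

Lemma normc_det_lt1 (M : 'M[R[i]]_2) : specnorm M < 1 -> normc (\det M) < 1.
Proof.
move=> M_lt1.
have col_lt1 k : normc (M 0 k) ^+ 2 + normc (M 1 k) ^+ 2 < 1.
  rewrite -ltr_sqrt ?ltr01 // sqrtr1; apply: le_lt_trans _ M_lt1.
  by apply: le_trans (vnorm2_col_le_specnorm M k); rewrite /vnorm2 big_ord2 !mxE.
rewrite det_mx2; apply: le_lt_trans (le_normcD _ _) _.
rewrite normcN !Normc.normcM.
have := col_lt1 0; have := col_lt1 1.
(* |ad - bc| <= (|a|^2 + |d|^2)/2 + (|b|^2 + |c|^2)/2 *)
have := sqr_ge0 (normc (M 0 0) - normc (M 1 1)).
have := sqr_ge0 (normc (M 0 1) - normc (M 1 0)).
nra.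
Qed.

Lemma normc_det_lt_of_contraction (A : 'M[R]_2) (P Q J : 'M[R[i]]_2) (eta : R) :
  P \in unitmx -> Q \in unitmx -> J 1 0 = 0 -> cplx_mx A = P *m J *m invmx P ->
  0 < eta -> 0 <= \tr A ->
  specnorm (invmx Q *m P *m expmx (eta%:C *: J)) < 1 ->
  normc (\det P) < normc (\det Q).
Proof.
move=> P_unit Q_unit J10 AJ eta_gt0 trA_ge0 /normc_det_lt1.
have etaJ10 : (eta%:C *: J) 1 0 = 0 by rewrite mxE J10 mulr0.
have tr_etaJ : \tr (eta%:C *: J) = (eta * \tr A)%:C.
  by rewrite mxtraceZ -(mxtrace_conj P J P_unit) -AJ trace_map_mx rmorphM.
rewrite !det_mulmx det_inv (det_expmx_upper2 _ _ etaJ10 tr_etaJ).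
rewrite !Normc.normcM Normc.normcV normc_real ger0_norm ?expR_ge0 //.
have exp_ge1 : 1 <= expR (eta * \tr A) by rewrite -expR0 ler_expR mulr_ge0 // ltW.
have detQ_gt0 : 0 < normc (\det Q).
  rewrite lt_neqAle normc_ge0 andbT eq_sym; apply/eqP => /Normc.eq0_normc detQ0.
  by move: Q_unit; rewrite unitmxE detQ0 unitr0.
rewrite -mulrA ltr_pdivrMl // mulr1 => growth; apply: le_lt_trans growth.
by rewrite ler_peMr ?normc_ge0.
Qed.

End complex_matrices.

Local Close Scope complex_scope.
Local Close Scope classical_set_scope.

Theorem proposition3p3 (R : realType) (k : nat) (E : rel 'I_k)
    (A : 'I_k -> 'M[R]_2) (P J : 'I_k -> 'M[R[i]]_2) :
  no_self_loops E ->
  (forall i, P i \in unitmx) ->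
  (forall i, is_jordan2 (J i)) ->
  (forall i, cplx_mx (A i) = P i *m J i *m invmx (P i)) ->
  (forall r s, E r s -> exists eta : R, 0 < eta /\
      specnorm (invmx (P s) *m P r *m expmx (eta%:C%C *: J r)) < 1) ->
  forall s : seq 'I_k, is_loop E s ->
    exists2 j, j \in s & \tr (A j) < 0.
Proof.
(* Self-loops need not be excluded: they lead to the same contradiction. *)
move=> _ P_unit J_jordan AJ contraction s [s_nz s_cycle].
have [/hasP[j j_s trj_lt0]|/hasPn tr_ge0] :=
  boolP (has (fun j => \tr (A j) < 0) s); first by exists j.
case/eqP: s_nz.
apply: (cycle_increasing_nil _ (fun r => Normc.normc (\det (P r))) _ _ s_cycle).
move=> r r_s t rt; have [eta [eta_gt0 eta_contr]] := contraction r t rt.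
apply: normc_det_lt_of_contraction eta_contr => //; first by case: (J_jordan r).
by rewrite leNgt; exact: tr_ge0.
Qed.
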